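(* In the setting of the context, assume that $P_1,P_2,P_m$ are Poisson distributions with parameters $\lambda_1,\lambda_2,\lambda_m>0$ respectively, that the thresholds depend only on the total number of neighbours, $K_j(a,b)=K_j(a+b)$, and that the seeding depends only on the total number of neighbours, $\alpha_j(a,b)=\alpha_j(a+b)$, for $j\in\{1,2\}$. Then the solution $\boldsymbol{\mu}(t)$ of $\frac{d\boldsymbol{\mu}}{dt}=F(\boldsymbol{\mu})-\boldsymbol{\mu}$, $\boldsymbol{\mu}(0)=(1,1,1,1)$, satisfies $\mu^{(1,1)}(t)=\mu^{(2,1)}(t)$ and $\mu^{(2,2)}(t)=\mu^{(1,2)}(t)$ for all $t\ge0$, so that the dimension of the differential equations reduces to $2$.
   Context: Two-community threshold adoption model. $P_1,P_2,P_m$ are probability distributions on $\mathbb{Z}_{\ge 0}$ with finite means $\lambda_1,\lambda_2,\lambda_m>0$: $P_j$ is the degree distribution inside community $j\in\{1,2\}$, $P_m$ that of links between communities. For $j\in\{1,2\}$, $-j$ denotes the other community. $K_j(a,b)\ge0$ is the threshold of a node of community $j$ with $a$ neighbours in its own and $b$ in the other community; $\alpha_j(a,b)\in[0,1]$ is its seeding probability. $Bi(k;n,p)=\binom nk p^k(1-p)^{n-k}$. Vectors $\boldsymbol{\mu}=(\mu^{(1,1)},\mu^{(1,2)},\mu^{(2,1)},\mu^{(2,2)})\in[0,1]^4$. $F:[0,1]^4\to[0,1]^4$ has components, for $j\in\{1,2\}$, $$F_{(j,j)}(\boldsymbol{\mu})=\sum_{a\ge1,b\ge0}\frac{aP_j(a)}{\lambda_j}P_m(b)(1-\alpha_j(a,b))\sum_{\substack{0\le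 u\le a-1,\ 0\le v\le b\\ u+v<K_j(a,b)}}Bi(u;a-1,1-\mu^{(j,j)})\,Bi(v;b,1-\mu^{(j,-j)}),$$ $$F_{(j,-j)}(\boldsymbol{\mu})=\sum_{a\ge0,b\ge1}P_{-j}(a)\frac{bP_m(b)}{\lambda_m}(1-\alpha_{-j}(a,b))\sum_{\substack{0\le u\le a,\ 0\le v\le b-1\\ u+v<K_{-j}(a,b)}}Bi(u;a,1-\mu^{(-j,-j)})\,Bi(v;b-1,1-\mu^{(-j,j)}).$$ The ODE $\dot{\boldsymbol{\mu}}=F(\boldsymbol{\mu})-\boldsymbol{\mu}$ started at $(1,1,1,1)$ describes (up to time change) the evolution of the adoption cascade. *)

From Stdlib Require Import Reals Lra Arith.
From Coquelicot Require Import Coquelicot.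
Open Scope R_scope.

Inductive comm : Type := Comm1 | Comm2.

Definition other (j : comm) : comm := match j with Comm1 => Comm2 | Comm2 => Comm1 end.

Definition Bi (k n : nat) (p : R) : R :=
  Binomial.C n k * p ^ k * (1 - p) ^ (n - k).

Definition poisson (lam : R) (k : nat) : R :=
  exp (- lam) * lam ^ k / INR (fact k).

Definition thr_sum (n m K : nat) (p q : R) : R :=
  sum_n (fun u => sum_n (fun v =>
     if (u + v <? K)%nat then Bi u n p * Bi v m q else 0) m) n.

(* A state mu : comm -> comm -> R, with  mu j k = mu^{(j,k)}.
   Model parameters:
     P j   : degree distribution inside community j (mean lam j),
     Pm    : degree distribution of links between communities (mean lamm),
     K j a b     : threshold of a node of community j with a own / b other neighbours,
     alpha j a b : seeding probability of such a node. *)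

Definition F_same (P : comm -> nat -> R) (Pm : nat -> R) (lam : comm -> R)
    (K : comm -> nat -> nat -> nat) (alpha : comm -> nat -> nat -> R)
    (mu : comm -> comm -> R) (j : comm) : R :=
  Series (fun a => Series (fun b =>
    if (a =? 0)%nat then 0 else
    INR a * P j a / lam j * Pm b * (1 - alpha j a b)
      * thr_sum (a - 1) b (K j a b) (1 - mu j j) (1 - mu j (other j)))).

Definition F_cross (P : comm -> nat -> R) (Pm : nat -> R) (lamm : R)
    (K : comm -> nat -> nat -> nat) (alpha : comm -> nat -> nat -> R)
    (mu : comm -> comm -> R) (j : comm) : R :=
  Series (fun a => Series (fun b =>
    if (b =? 0)%nat then 0 else
    P (other j) a * (INR b * Pm b / lamm) * (1 - alpha (other j) a b)
      * thr_sum a (b - 1) (K (other j) a b)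
          (1 - mu (other j) (other j)) (1 - mu (other j) j))).

Definition comm_eqb (j k : comm) : bool :=
  match j, k with Comm1, Comm1 | Comm2, Comm2 => true | _, _ => false end.

Definition F (P : comm -> nat -> R) (Pm : nat -> R) (lam : comm -> R) (lamm : R)
    (K : comm -> nat -> nat -> nat) (alpha : comm -> nat -> nat -> R)
    (mu : comm -> comm -> R) (j k : comm) : R :=
  if comm_eqb j k then F_same P Pm lam K alpha mu j
  else F_cross P Pm lamm K alpha mu j.

(** For Poisson degrees the size-biased law [k P(k) / lam] of [P] is [P] shifted by one.
    Hence, once the edge reached through is removed, a node reached along an edge inside
    community [j] and a node of [j] reached along a cross edge have the same law of
    (own, other) residual degrees, and since thresholds and seeding only see the total
    degree, [F_(j,j)] and [F_(-j,j)] coincide as functions of [mu].  The difference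
    [D = mu^(j,j) - mu^(-j,j)] thus solves [D' = -D] with [D(0) = 0], so [D e^t] is
    constant and tends to [0] at [0+]. *)
From Stdlib Require Import Reals Lra Lia.
From Coquelicot Require Import Coquelicot.
Open Scope R_scope.

Lemma Series_const0 : Series (fun _ => 0) = 0.
Proof.
  transitivity (Series (fun _ => 0 * 0)).
  - apply Series_ext; intros n; now rewrite Rmult_0_l.
  - rewrite Series_scal_l; ring.
Qed.

Lemma poisson_size_biased (lam : R) (a : nat) :
  0 < lam -> INR (S a) * poisson lam (S a) / lam = poisson lam a.
Proof.
  intros Hlam; unfold poisson; simpl pow.
  change (Factorial.fact (S a)) with (S a * Factorial.fact a)%nat; rewrite mult_INR.
  assert (Hfact : INR (Factorial.fact a) <> 0) by apply (not_0_INR _ (Factorial.fact_neq_0 a)).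
  assert (HSa : INR (S a) <> 0) by (apply not_0_INR; lia).
  field; lra.
Qed.

Lemma F_same_poisson_eq_F_cross (lam : comm -> R) (lamm : R)
    (K : comm -> nat -> nat) (alpha : comm -> nat -> R) (mu : comm -> comm -> R) (j : comm) :
  (forall j, 0 < lam j) -> 0 < lamm ->
  F_same (fun j => poisson (lam j)) (poisson lamm) lam
    (fun j a b => K j (a + b)%nat) (fun j a b => alpha j (a + b)%nat) mu j =
  F_cross (fun j => poisson (lam j)) (poisson lamm) lamm
    (fun j a b => K j (a + b)%nat) (fun j a b => alpha j (a + b)%nat) mu (other j).
Proof.
  intros Hlam Hlamm; unfold F_same, F_cross.
  rewrite Series_incr_1_aux by apply Series_const0.
  apply Series_ext; intros a.
  rewrite (Series_incr_1_aux (fun b => if (b =? 0)%nat then _ else _)) by reflexivity.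
  apply Series_ext; intros b; simpl Nat.eqb; cbv iota.
  replace (other (other j)) with j by now destruct j.
  rewrite !poisson_size_biased by auto.
  replace (S a - 1)%nat with a by lia; replace (S b - 1)%nat with b by lia.
  replace (S a + b)%nat with (a + S b)%nat by lia.
  ring.
Qed.

Lemma filterlim_Rminus {T : Type} {F : (T -> Prop) -> Prop} {FF : Filter F}
    (f g : T -> R) (a b : R) :
  filterlim f F (locally a) -> filterlim g F (locally b) ->
  filterlim (fun x => f x - g x) F (locally (a - b)).
Proof.
  intros Hf Hg.
  apply (filterlim_comp_2 f (fun x => opp (g x)) plus Hf
           (filterlim_comp _ _ _ g opp _ _ _ Hg (filterlim_opp b)) (filterlim_plus a (opp b))).
Qed.

Lemma is_derive0_const_pos (g : R -> R) :
  (forall s, 0 < s -> is_derive g s 0) -> forall s t, 0 < s < t -> g s = g t.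
Proof.
  intros Hg s t Hst.
  destruct (MVT_gen g s t (fun _ => 0)) as [c [_ Hc]].
  - intros x Hx; rewrite Rmin_left in Hx by lra; apply Hg; lra.
  - intros x Hx; rewrite Rmin_left in Hx by lra.
    apply continuity_pt_filterlim, (ex_derive_continuous g).
    exists 0; apply Hg; lra.
  - lra.
Qed.

Lemma eq0_of_is_derive_opp (D : R -> R) :
  filterlim D (at_right 0) (locally 0) ->
  (forall t, 0 < t -> is_derive D t (- D t)) ->
  forall t, 0 < t -> D t = 0.
Proof.
  intros HD0 HD t Ht.
  set (g := fun s => D s * exp s).
  assert (Hg' : forall s, 0 < s -> is_derive g s 0).
  { intros s Hs.
    assert (Hprod := is_derive_mult D exp s _ _ (HD s Hs) (is_derive_exp s) Rmult_comm).
    replace 0 with (plus (mult (- D s) (exp s)) (mult (D s) (exp s)))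
      by (unfold plus, mult; simpl; ring).
    exact Hprod. }
  assert (Hlim0 : filterlim g (at_right 0) (locally (0 * exp 0))).
  { assert (Hexp : filterlim exp (at_right 0) (locally (exp 0))).
    { apply (filterlim_filter_le_1 (F := locally 0)); [ | apply continuous_exp].
      intros P [d Hd]; exists d; intros y Hy _; now apply Hd. }
    exact (filterlim_comp_2 D exp Rmult HD0 Hexp (filterlim_mult 0 (exp 0))). }
  assert (Hlimt : filterlim g (at_right 0) (locally (g t))).
  { apply (filterlim_ext_loc (fun _ => g t)); [ | apply filterlim_const].
    exists (mkposreal t Ht); intros s Hs Hs0; simpl in Hs.
    apply Rabs_lt_between' in Hs.
    symmetry; apply is_derive0_const_pos; auto.
    unfold minus, plus, opp in Hs; simpl in Hs; lra. }
  assert (Hgt : g t = 0).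
  { rewrite (filterlim_locally_unique _ _ _ Hlimt Hlim0); ring. }
  unfold g in Hgt; apply Rmult_integral in Hgt as [Hgt | Hexp]; [exact Hgt | ].
  pose proof (exp_pos t); lra.
Qed.

Lemma F_poisson_diag_eq_cross (lam : comm -> R) (lamm : R)
    (K : comm -> nat -> nat) (alpha : comm -> nat -> R) (mu : comm -> comm -> R) (j : comm) :
  (forall j, 0 < lam j) -> 0 < lamm ->
  F (fun j => poisson (lam j)) (poisson lamm) lam lamm
    (fun j a b => K j (a + b)%nat) (fun j a b => alpha j (a + b)%nat) mu j j =
  F (fun j => poisson (lam j)) (poisson lamm) lam lamm
    (fun j a b => K j (a + b)%nat) (fun j a b => alpha j (a + b)%nat) mu (other j) j.
Proof.
  intros Hlam Hlamm; unfold F.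
  destruct j; apply F_same_poisson_eq_F_cross; assumption.
Qed.

Lemma mu_diag_eq_cross (lam : comm -> R) (lamm : R)
    (Hlam : forall j, 0 < lam j) (Hlamm : 0 < lamm)
    (K : comm -> nat -> nat) (alpha : comm -> nat -> R)
    (mu : R -> comm -> comm -> R)
    (Hinit : forall j k, mu 0 j k = 1)
    (Hcont0 : forall j k, filterlim (fun s => mu s j k) (at_right 0) (locally (mu 0 j k)))
    (Hode : forall t j k, 0 < t ->
       is_derive (fun s => mu s j k) t
         (F (fun j => poisson (lam j)) (poisson lamm) lam lamm
            (fun j a b => K j (a + b)%nat) (fun j a b => alpha j (a + b)%nat)
            (mu t) j k - mu t j k))
    (j : comm) :
  forall t, 0 <= t -> mu t j j = mu t (other j) j.
Proof.
  intros t Ht.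
  destruct (Rle_lt_or_eq_dec 0 t Ht) as [Htpos | <-]; [ | now rewrite !Hinit].
  apply Rminus_diag_uniq.
  apply (eq0_of_is_derive_opp (fun s => mu s j j - mu s (other j) j)); [ | | exact Htpos].
  - assert (Hlim := filterlim_Rminus _ _ _ _ (Hcont0 j j) (Hcont0 (other j) j)).
    rewrite !Hinit, Rminus_diag in Hlim; exact Hlim.
  - intros s Hs.
    assert (Hdiff := is_derive_minus _ _ _ _ _ (Hode s j j Hs) (Hode s (other j) j Hs)).
    rewrite F_poisson_diag_eq_cross in Hdiff by assumption.
    unfold minus, plus, opp in Hdiff; simpl in Hdiff.
    set (c := F _ _ _ _ _ _ (mu s) (other j) j) in Hdiff.
    replace (- (mu s j j - mu s (other j) j)) with (c - mu s j j + - (c - mu s (other j) j))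
      by ring.
    exact Hdiff.
Qed.

Theorem theorem9p1
  (lam : comm -> R) (lamm : R)
  (Hlam : forall j, 0 < lam j) (Hlamm : 0 < lamm)
  (K : comm -> nat -> nat)              (* K_j(a,b) = K j (a+b) *)
  (alpha : comm -> nat -> R)            (* alpha_j(a,b) = alpha j (a+b) *)
  (Halpha : forall j n, 0 <= alpha j n <= 1)
  (mu : R -> comm -> comm -> R)
  (Hinit : forall j k, mu 0 j k = 1)
  (Hrange : forall t j k, 0 <= t -> 0 <= mu t j k <= 1)
  (Hcont0 : forall j k, filterlim (fun s => mu s j k) (at_right 0) (locally (mu 0 j k)))
  (Hode : forall t j k, 0 < t ->
     is_derive (fun s => mu s j k) t
       (F (fun j => poisson (lam j)) (poisson lamm) lam lamm
          (fun j a b => K j (a + b)%nat) (fun j a b => alpha j (a + b)%nat)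
          (mu t) j k - mu t j k)) :
  forall t, 0 <= t -> mu t Comm1 Comm1 = mu t Comm2 Comm1 /\ mu t Comm2 Comm2 = mu t Comm1 Comm2.
Proof.
  intros t Ht; split.
  - exact (mu_diag_eq_cross lam lamm Hlam Hlamm K alpha mu Hinit Hcont0 Hode Comm1 t Ht).
  - exact (mu_diag_eq_cross lam lamm Hlam Hlamm K alpha mu Hinit Hcont0 Hode Comm2 t Ht).
Qed.
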